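(* For $\epsilon>0$ sufficiently small, $R_\pi^\natural(S^1\times D^2,A_1)$ is homeomorphic to $S^2$. Explicitly, with $(\phi,\theta)$, $\phi\in[0,\pi]$, $\theta\in[0,2\pi]$, spherical-polar coordinates on $S^2$ and $\nu=\epsilon\sin\phi$, the map sending $(\phi,\theta)$ to the class of $$a=i\sigma_z,\qquad h=(\cos^2\nu+\sin^2\nu\sin^2\theta)^{-1/2}\big(i\sigma_x\cos\nu-i\sigma_z\sin\nu\sin\theta\big),$$ $$A=h\big(\cos\phi+i\sin\phi(\sigma_x\cos\theta+\sigma_y\sin\theta)\big),\qquad B=\cos\nu+i\sin\nu(\sigma_x\cos\theta+\sigma_y\sin\theta),$$ $$b=-ha^{-1}h^{-1},\qquad w=-1,$$ is a well-defined homeomorphism $S^2\to R_\pi^\natural(S^1\times D^2,A_1)$.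
   Context: Pauli matrices standard; $\hat r\cdot\vec\sigma=r_x\sigma_x+r_y\sigma_y+r_z\sigma_z$. Fix $\epsilon>0$. $R_\pi^\natural(S^1\times D^2,A_1)$ is the holonomy-perturbed traceless character variety of a solid torus containing an unknotted arc $A_1$, a meridional loop $H$ around it, an arc $W$ from $A_1$ to $H$, and a perturbation loop $P$; the fundamental group of the complement is $\langle A,B,a,b,h,w\mid hwaB=aBh,\ b=ha^{-1}w^{-1}h^{-1}\rangle$, and the longitude and meridian of a tubular neighborhood of $P$ are $\lambda_P=h^{-1}A$ and $\mu_P=B$. Concretely, $R_\pi^\natural(S^1\times D^2,A_1)$ is the space of tuples $(A,B,a,b,h,w)\in SU(2)^6$ with $\operatorname{tr}a=\operatorname{tr}h=0$, $w=-1$, $hwaB=aBh$, $b=ha^{-1}w^{-1}h^{-1}$, and such that whenever $h^{-1}A=\cos\phi+i\sin\phi\,\hat r\cdot\vec\sigma$ with $\phi\in\mathbb{R}$, $\hat r\in S^2$, one has $B=\cos\nu+i\sin\nu\,\hat r\cdot\vec\sigma$ with $\nu=\epsilon\sin\phi$; modulo simultaneous conjugation, with the quotient topology. *)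

From Stdlib Require Import Reals.
Open Scope R_scope.

(* An element  q0 * 1 + i (q1 sigma_x + q2 sigma_y + q3 sigma_z)  of the real
   span of 1, i sigma_x, i sigma_y, i sigma_z (Pauli matrices standard).
   SU(2) is exactly the set of such matrices with q0^2+q1^2+q2^2+q3^2 = 1,
   and the matrix product is given by
   (a0 + i a.s)(b0 + i b.s) = (a0 b0 - a.b) + i (a0 b + b0 a - a x b).s *)
Record quat := Qt { q0 : R; q1 : R; q2 : R; q3 : R }.

Definition qmul (a b : quat) : quat :=
  Qt (q0 a * q0 b - (q1 a * q1 b + q2 a * q2 b + q3 a * q3 b))
     (q0 a * q1 b + q0 b * q1 a - (q2 a * q3 b - q3 a * q2 b))
     (q0 a * q2 b + q0 b * q2 a - (q3 a * q1 b - q1 a * q3 b))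
     (q0 a * q3 b + q0 b * q3 a - (q1 a * q2 b - q2 a * q1 b)).

Definition qnorm2 (a : quat) : R := q0 a ^ 2 + q1 a ^ 2 + q2 a ^ 2 + q3 a ^ 2.

(* matrix inverse (adjugate / determinant; determinant = qnorm2) *)
Definition qinv (a : quat) : quat :=
  Qt (q0 a / qnorm2 a) (- q1 a / qnorm2 a) (- q2 a / qnorm2 a) (- q3 a / qnorm2 a).

Definition qopp (a : quat) : quat := Qt (- q0 a) (- q1 a) (- q2 a) (- q3 a).

Definition qone : quat := Qt 1 0 0 0.

Definition in_SU2 (a : quat) : Prop := qnorm2 a = 1.

(* trace of q0 + i q.sigma is 2 q0 *)
Definition qtrace (a : quat) : R := 2 * q0 a.

Definition qexp (t r0 r1 r2 : R) : quat :=
  Qt (cos t) (sin t * r0) (sin t * r1) (sin t * r2).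

Record rep := Rep { rA : quat; rB : quat; ra : quat; rb : quat; rh : quat; rw : quat }.

(* the (unquotiented) set defining R_pi^natural(S^1 x D^2, A_1) *)
Definition in_Rset (eps : R) (x : rep) : Prop :=
  in_SU2 (rA x) /\ in_SU2 (rB x) /\ in_SU2 (ra x) /\ in_SU2 (rb x) /\
  in_SU2 (rh x) /\ in_SU2 (rw x) /\
  qtrace (ra x) = 0 /\ qtrace (rh x) = 0 /\
  rw x = qopp qone /\
  qmul (qmul (qmul (rh x) (rw x)) (ra x)) (rB x) = qmul (qmul (ra x) (rB x)) (rh x) /\
  rb x = qmul (qmul (qmul (rh x) (qinv (ra x))) (qinv (rw x))) (qinv (rh x)) /\
  (forall phi r0 r1 r2 : R, r0 ^ 2 + r1 ^ 2 + r2 ^ 2 = 1 ->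
     qmul (qinv (rh x)) (rA x) = qexp phi r0 r1 r2 ->
     rB x = qexp (eps * sin phi) r0 r1 r2).

Definition qconj (g a : quat) : quat := qmul (qmul g a) (qinv g).

Definition rep_conj (x y : rep) : Prop :=
  exists g : quat, in_SU2 g /\
    rA y = qconj g (rA x) /\ rB y = qconj g (rB x) /\ ra y = qconj g (ra x) /\
    rb y = qconj g (rb x) /\ rh y = qconj g (rh x) /\ rw y = qconj g (rw x).

Definition qdist2 (a b : quat) : R :=
  (q0 a - q0 b) ^ 2 + (q1 a - q1 b) ^ 2 + (q2 a - q2 b) ^ 2 + (q3 a - q3 b) ^ 2.

Definition rep_dist (x y : rep) : R :=
  sqrt (qdist2 (rA x) (rA y) + qdist2 (rB x) (rB y) + qdist2 (ra x) (ra y) +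
        qdist2 (rb x) (rb y) + qdist2 (rh x) (rh y) + qdist2 (rw x) (rw y)).

Definition pt3 : Type := (R * R * R)%type.

Definition dist3 (p q : pt3) : R :=
  let '(x1, y1, z1) := p in let '(x2, y2, z2) := q in
  sqrt ((x1 - x2) ^ 2 + (y1 - y2) ^ 2 + (z1 - z2) ^ 2).

Definition in_S2 (p : pt3) : Prop :=
  let '(x, y, z) := p in x ^ 2 + y ^ 2 + z ^ 2 = 1.

Definition open_in {T : Type} (d : T -> T -> R) (S U : T -> Prop) : Prop :=
  forall x, S x -> U x -> exists delta, delta > 0 /\
    forall y, S y -> d x y < delta -> U y.

(* subsets of the set X saturated w.r.t. the equivalence relation E:
   these are exactly the preimages of subsets of the quotient X/E *)
Definition saturated {T : Type} (X : T -> Prop) (E : T -> T -> Prop) (W : T -> Prop) : Prop :=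
  forall x y, X x -> X y -> E x y -> W x -> W y.

Definition sph (phi theta : R) : pt3 :=
  (sin phi * cos theta, sin phi * sin theta, cos phi).

Definition in_coord_range (phi theta : R) : Prop :=
  0 <= phi <= PI /\ 0 <= theta <= 2 * PI.

Definition param (eps phi theta : R) : rep :=
  let nu := eps * sin phi in
  let c := sqrt (cos nu ^ 2 + sin nu ^ 2 * sin theta ^ 2) in
  let a := Qt 0 0 0 1 in
  let h := Qt 0 (cos nu / c) 0 (- (sin nu * sin theta) / c) in
  let A := qmul h (Qt (cos phi) (sin phi * cos theta) (sin phi * sin theta) 0) in
  let B := Qt (cos nu) (sin nu * cos theta) (sin nu * sin theta) 0 in
  let b := qopp (qmul (qmul h (qinv a)) (qinv h)) in
  let w := qopp qone in
  Rep A B a b h w.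

(* Conjugating first [a] to [i sigma_z] and then [h] into the (sigma_x, sigma_z)-plane
   with positive sigma_x part brings every point into a normal form: the relation
   [h w a B = a B h] forces [B] into the (1, sigma_x, sigma_y)-plane and determines [h]
   from [B], and the holonomy condition determines [B] from the longitude [h^-1 A],
   which is an arbitrary unit quaternion of the (1, sigma_x, sigma_y)-plane, that is,
   a point of [S^2].  Conversely the axis of the longitude, read in the frame formed by
   [a] and the component of [h] orthogonal to [a], is a continuous conjugation
   invariant inverting the parametrization.  The parametrization itself is continuous
   on [S^2] once written with [sinc], which removes the coordinate singularity at the
   poles.  Smallness of [eps] ([eps < 1] suffices) only serves to keep
   [cos (eps sin phi)] positive, so that [h] is well defined. *)

From Stdlib Require Import Reals Lra Psatz.
Open Scope R_scope.

(** * Quaternion algebra *)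

Lemma quat_eq (a b : quat) :
  q0 a = q0 b -> q1 a = q1 b -> q2 a = q2 b -> q3 a = q3 b -> a = b.
Proof. destruct a, b; simpl; intros; subst; reflexivity. Qed.

Ltac quat_eq := apply quat_eq; simpl.

(* After unfolding, the side condition left by [field] agrees with the hypothesis
   [qnorm2 g <> 0] only up to [ring]. *)
Ltac qnorm2_neq0 :=
  match goal with H : ?a <> 0 |- ?b <> 0 =>
    let E := fresh in intro E; apply H; transitivity b; [ring | exact E] end.

Definition qscale (s : R) (a : quat) : quat := Qt (s * q0 a) (s * q1 a) (s * q2 a) (s * q3 a).
Definition qadd (a b : quat) : quat :=
  Qt (q0 a + q0 b) (q1 a + q1 b) (q2 a + q2 b) (q3 a + q3 b).

Lemma qmul_assoc a b c : qmul (qmul a b) c = qmul a (qmul b c).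
Proof. destruct a, b, c; quat_eq; ring. Qed.

Lemma qmul_1l a : qmul qone a = a.
Proof. destruct a; quat_eq; ring. Qed.

Lemma qmul_1r a : qmul a qone = a.
Proof. destruct a; quat_eq; ring. Qed.

Lemma qmul_opp_l a b : qmul (qopp a) b = qopp (qmul a b).
Proof. destruct a, b; quat_eq; ring. Qed.

Lemma qmul_m1r a : qmul a (qopp qone) = qopp a.
Proof. destruct a; quat_eq; ring. Qed.

Lemma qnorm2_mul a b : qnorm2 (qmul a b) = qnorm2 a * qnorm2 b.
Proof. destruct a, b; unfold qnorm2; simpl; ring. Qed.

Lemma qnorm2_opp a : qnorm2 (qopp a) = qnorm2 a.
Proof. destruct a; unfold qnorm2; simpl; ring. Qed.

Lemma qnorm2_scale s a : qnorm2 (qscale s a) = s ^ 2 * qnorm2 a.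
Proof. destruct a; unfold qnorm2, qscale; simpl; ring. Qed.

Lemma qnorm2_1 : qnorm2 qone = 1.
Proof. unfold qnorm2; simpl; ring. Qed.

Lemma qnorm2_ge0 a : 0 <= qnorm2 a.
Proof. destruct a; unfold qnorm2; simpl; nra. Qed.

Lemma in_SU2_neq0 a : in_SU2 a -> qnorm2 a <> 0.
Proof. unfold in_SU2; lra. Qed.

Lemma qmul_inv_r a : qnorm2 a <> 0 -> qmul a (qinv a) = qone.
Proof. destruct a; unfold qinv, qnorm2; simpl; intro; quat_eq; field; qnorm2_neq0. Qed.

Lemma qmul_inv_l a : qnorm2 a <> 0 -> qmul (qinv a) a = qone.
Proof. destruct a; unfold qinv, qnorm2; simpl; intro; quat_eq; field; qnorm2_neq0. Qed.

Lemma qnorm2_inv a : qnorm2 a <> 0 -> qnorm2 (qinv a) = / qnorm2 a.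
Proof. destruct a; unfold qinv, qnorm2; simpl; intro; field; qnorm2_neq0. Qed.

Lemma qnorm2_inv_neq0 a : qnorm2 a <> 0 -> qnorm2 (qinv a) <> 0.
Proof. intro Ha; rewrite qnorm2_inv by exact Ha; exact (Rinv_neq_0_compat _ Ha). Qed.

Lemma qinv_m1 : qinv (qopp qone) = qopp qone.
Proof. unfold qinv, qnorm2; simpl; quat_eq; field. Qed.

Lemma qinv_unique a b : qmul a b = qone -> qnorm2 b <> 0 -> a = qinv b.
Proof.
  intros Hab Hb.
  rewrite <- (qmul_1r a), <- (qmul_inv_r b Hb), <- qmul_assoc, Hab, qmul_1l.
  reflexivity.
Qed.

Lemma qinv_mul a b : qnorm2 a <> 0 -> qnorm2 b <> 0 ->
  qinv (qmul a b) = qmul (qinv b) (qinv a).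
Proof.
  intros Ha Hb; symmetry; apply qinv_unique.
  - rewrite !qmul_assoc, <- (qmul_assoc (qinv a) a), qmul_inv_l, qmul_1l by exact Ha.
    exact (qmul_inv_l b Hb).
  - rewrite qnorm2_mul; exact (Rmult_integral_contrapositive _ _ (conj Ha Hb)).
Qed.

Section Conjugation.

Variable g : quat.
Hypothesis Hg : qnorm2 g <> 0.

Lemma qconj_mul a b : qconj g (qmul a b) = qmul (qconj g a) (qconj g b).
Proof.
  unfold qconj; rewrite !qmul_assoc, <- (qmul_assoc (qinv g) g), qmul_inv_l, qmul_1l
    by exact Hg.
  reflexivity.
Qed.

Lemma qnorm2_conj a : qnorm2 (qconj g a) = qnorm2 a.
Proof. unfold qconj; rewrite !qnorm2_mul, qnorm2_inv by exact Hg; field; exact Hg. Qed.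

Lemma q0_conj a : q0 (qconj g a) = q0 a.
Proof.
  destruct g, a; unfold qconj, qinv, qnorm2 in *; simpl in *; field; qnorm2_neq0.
Qed.

Lemma qconj_real c : qconj g (Qt c 0 0 0) = Qt c 0 0 0.
Proof.
  destruct g; unfold qconj, qinv, qnorm2 in *; simpl in *; quat_eq; field; qnorm2_neq0.
Qed.

Lemma qconj_opp a : qconj g (qopp a) = qopp (qconj g a).
Proof.
  destruct g, a; unfold qconj, qopp, qinv, qnorm2 in *; simpl in *; quat_eq; field;
    qnorm2_neq0.
Qed.

Lemma qconj_add a b : qconj g (qadd a b) = qadd (qconj g a) (qconj g b).
Proof.
  destruct g, a, b; unfold qconj, qadd, qinv, qnorm2 in *; simpl in *; quat_eq; field;
    qnorm2_neq0.
Qed.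

Lemma qconj_scale s a : qconj g (qscale s a) = qscale s (qconj g a).
Proof.
  destruct g, a; unfold qconj, qscale, qinv, qnorm2 in *; simpl in *; quat_eq; field;
    qnorm2_neq0.
Qed.

Lemma qconj_inv a : qnorm2 a <> 0 -> qconj g (qinv a) = qinv (qconj g a).
Proof.
  intro Ha; apply qinv_unique.
  - rewrite <- qconj_mul, qmul_inv_l by exact Ha; exact (qconj_real 1).
  - rewrite qnorm2_conj; exact Ha.
Qed.

Lemma qconj_qexp t r0 r1 r2 :
  let r := qconj g (Qt 0 r0 r1 r2) in
  qconj g (qexp t r0 r1 r2) = qexp t (q1 r) (q2 r) (q3 r).
Proof.
  destruct g; unfold qconj, qexp, qinv, qnorm2 in *; simpl in *; quat_eq; field;
    qnorm2_neq0.
Qed.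

End Conjugation.

Lemma qconj_1 a : qconj qone a = a.
Proof. destruct a; unfold qconj, qinv, qnorm2; simpl; quat_eq; field. Qed.

Lemma qconj_comp g1 g2 a : qnorm2 g1 <> 0 -> qnorm2 g2 <> 0 ->
  qconj (qmul g2 g1) a = qconj g2 (qconj g1 a).
Proof. intros H1 H2; unfold qconj; rewrite qinv_mul, !qmul_assoc by assumption; reflexivity. Qed.

Lemma qconjVK g a : qnorm2 g <> 0 -> qconj g (qconj (qinv g) a) = a.
Proof.
  intro Hg; rewrite <- qconj_comp, qmul_inv_r by auto using qnorm2_inv_neq0.
  apply qconj_1.
Qed.

Lemma qconjK g a : qnorm2 g <> 0 -> qconj (qinv g) (qconj g a) = a.
Proof.
  intro Hg; rewrite <- qconj_comp, qmul_inv_l by auto using qnorm2_inv_neq0.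
  apply qconj_1.
Qed.

Lemma qconj_scale_l s g a : s <> 0 -> qnorm2 g <> 0 -> qconj (qscale s g) a = qconj g a.
Proof.
  intros Hs Hg.
  assert (Hsg : qnorm2 (qscale s g) <> 0).
  { rewrite qnorm2_scale; apply Rmult_integral_contrapositive; split; [apply pow_nonzero|]; auto. }
  destruct g, a; unfold qconj, qscale, qinv, qnorm2 in *; simpl in *; quat_eq;
    field; split; qnorm2_neq0.
Qed.

(** * The conjugation action *)

Definition rep_act (g : quat) (x : rep) : rep :=
  Rep (qconj g (rA x)) (qconj g (rB x)) (qconj g (ra x)) (qconj g (rb x))
      (qconj g (rh x)) (qconj g (rw x)).

(* The last clause of [in_Rset], with [Q] the longitude [h^-1 A]. *)
Definition holonomy_condition (eps : R) (Q B : quat) : Prop :=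
  forall phi r0 r1 r2 : R, r0 ^ 2 + r1 ^ 2 + r2 ^ 2 = 1 ->
    Q = qexp phi r0 r1 r2 -> B = qexp (eps * sin phi) r0 r1 r2.

Lemma holonomy_condition_conj eps g Q B : qnorm2 g <> 0 ->
  holonomy_condition eps Q B -> holonomy_condition eps (qconj g Q) (qconj g B).
Proof.
  intros Hg HQB phi r0 r1 r2 Hr HQ.
  pose proof (qnorm2_inv_neq0 g Hg) as Hg'.
  set (p := qconj (qinv g) (Qt 0 r0 r1 r2)).
  assert (Hp : Qt 0 (q1 p) (q2 p) (q3 p) = p).
  { assert (E : q0 p = 0) by (unfold p; rewrite q0_conj by exact Hg'; reflexivity).
    destruct p; simpl in *; subst; reflexivity. }
  assert (Hpn : q1 p ^ 2 + q2 p ^ 2 + q3 p ^ 2 = 1).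
  { assert (E := qnorm2_conj _ Hg' (Qt 0 r0 r1 r2)); fold p in E.
    rewrite <- Hp in E; unfold qnorm2 in E; cbn [q0 q1 q2 q3] in E; lra. }
  assert (HQp : Q = qexp phi (q1 p) (q2 p) (q3 p)).
  { rewrite <- (qconjK g Q Hg), HQ; exact (qconj_qexp _ Hg' _ _ _ _). }
  rewrite (HQB _ _ _ _ Hpn HQp), qconj_qexp, Hp by exact Hg.
  unfold p; rewrite qconjVK by exact Hg; reflexivity.
Qed.

Definition longitude (x : rep) : quat := qmul (qinv (rh x)) (rA x).

Lemma in_Rset_act eps g x : qnorm2 g <> 0 -> in_Rset eps x -> in_Rset eps (rep_act g x).
Proof.
  intros Hg [HA [HB [Ha [Hb [Hh [Hw [Hta [Hth [Hw1 [Hrel [Hbe Hhol]]]]]]]]]]].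
  unfold in_Rset, rep_act, in_SU2, qtrace in *; cbn [rA rB ra rb rh rw].
  rewrite !qnorm2_conj, !q0_conj by exact Hg.
  repeat split; auto.
  - rewrite Hw1, qconj_opp by exact Hg; exact (f_equal qopp (qconj_real g Hg 1)).
  - rewrite <- !qconj_mul, Hrel by exact Hg; reflexivity.
  - rewrite Hbe, !qconj_mul, !qconj_inv by auto using in_SU2_neq0; reflexivity.
  - rewrite <- qconj_inv, <- qconj_mul by auto using in_SU2_neq0.
    exact (holonomy_condition_conj eps g _ _ Hg Hhol).
Qed.

Lemma rep_conj_refl x : rep_conj x x.
Proof. exists qone; rewrite !qconj_1; repeat split; exact qnorm2_1. Qed.

Lemma rep_conj_trans x y z : rep_conj x y -> rep_conj y z -> rep_conj x z.
Proof.
  intros [g1 [H1 [E1 [E2 [E3 [E4 [E5 E6]]]]]]] [g2 [H2 [F1 [F2 [F3 [F4 [F5 F6]]]]]]].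
  exists (qmul g2 g1); split.
  - unfold in_SU2 in *; rewrite qnorm2_mul, H1, H2; ring.
  - rewrite !qconj_comp by auto using in_SU2_neq0.
    rewrite F1, F2, F3, F4, F5, F6, E1, E2, E3, E4, E5, E6; repeat split.
Qed.

Lemma rep_conjP x y : rep_conj x y <-> exists g, in_SU2 g /\ y = rep_act g x.
Proof.
  split.
  - intros [g [Hg [E1 [E2 [E3 [E4 [E5 E6]]]]]]]; exists g; split; auto.
    destruct y; unfold rep_act; simpl in *; subst; reflexivity.
  - intros [g [Hg ->]]; exists g; repeat split; exact Hg.
Qed.

(* Conjugation by [g] and by [g/|g|] agree, so any invertible [g] will do. *)
Lemma rep_conj_act g x : qnorm2 g <> 0 -> rep_conj x (rep_act g x).
Proof.
  intro Hg.
  assert (Hpos : 0 < qnorm2 g) by (pose proof (qnorm2_ge0 g); lra).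
  assert (Hs : 0 < sqrt (qnorm2 g)) by (apply sqrt_lt_R0; exact Hpos).
  apply rep_conjP; exists (qscale (/ sqrt (qnorm2 g)) g); split.
  - unfold in_SU2; rewrite qnorm2_scale.
    rewrite <- (sqrt_sqrt (qnorm2 g)) at 2 by lra.
    field; lra.
  - unfold rep_act; rewrite !qconj_scale_l by (auto; apply Rinv_neq_0_compat; lra).
    reflexivity.
Qed.

(** * Polar forms *)

Lemma sin_sq_add_cos_sq t : sin t ^ 2 + cos t ^ 2 = 1.
Proof. rewrite <- !Rsqr_pow2; apply sin2_cos2. Qed.

Lemma sqr_eq_cases a b : a ^ 2 = b ^ 2 -> a = b \/ a = - b.
Proof.
  intro H; assert (E : (a - b) * (a + b) = 0) by nra.
  destruct (Rmult_integral _ _ E); [left | right]; lra.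
Qed.

(* The holonomy condition does not depend on the choice of polar form of [Q]:
   [phi] and the axis are determined up to a simultaneous sign change, and
   [qexp] is invariant under it because [sin] is odd and [cos] even. *)
Lemma qexp_holonomy_eq eps phi r0 r1 r2 phi' s0 s1 s2 :
  r0 ^ 2 + r1 ^ 2 + r2 ^ 2 = 1 -> s0 ^ 2 + s1 ^ 2 + s2 ^ 2 = 1 ->
  qexp phi r0 r1 r2 = qexp phi' s0 s1 s2 ->
  qexp (eps * sin phi) r0 r1 r2 = qexp (eps * sin phi') s0 s1 s2.
Proof.
  intros Hr Hs E; unfold qexp in *; injection E as _ E1 E2 E3.
  assert (Hsin : sin phi ^ 2 = sin phi' ^ 2).
  { transitivity (sin phi ^ 2 * (r0 ^ 2 + r1 ^ 2 + r2 ^ 2)); [rewrite Hr; ring|].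
    transitivity (sin phi' ^ 2 * (s0 ^ 2 + s1 ^ 2 + s2 ^ 2)); [|rewrite Hs; ring].
    replace (sin phi ^ 2 * (r0 ^ 2 + r1 ^ 2 + r2 ^ 2))
      with ((sin phi * r0) ^ 2 + (sin phi * r1) ^ 2 + (sin phi * r2) ^ 2) by ring.
    rewrite E1, E2, E3; ring. }
  destruct (Req_dec (sin phi) 0) as [Z|Z].
  - assert (Z' : sin phi' = 0) by nra.
    rewrite Z, Z', Rmult_0_r, sin_0; quat_eq; ring.
  - assert (Hdiv : forall r s, sin phi * r = sin phi' * s -> r = s / sin phi * sin phi').
    { intros r s Hrs; apply (Rmult_eq_reg_l (sin phi)); [rewrite Hrs; field|]; auto. }
    apply Hdiv in E1, E2, E3; subst r0 r1 r2.
    destruct (sqr_eq_cases _ _ Hsin) as [S|S]; rewrite S.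
    + quat_eq; field; lra.
    + replace (eps * - sin phi') with (- (eps * sin phi')) by ring.
      rewrite cos_neg, sin_neg; rewrite S in Z; quat_eq; field; lra.
Qed.

Lemma angle_of_unit c s : c ^ 2 + s ^ 2 = 1 ->
  exists theta, 0 <= theta <= 2 * PI /\ cos theta = c /\ sin theta = s.
Proof.
  intro H; assert (Hc : -1 <= c <= 1) by nra.
  pose proof (acos_bound c) as Hb; pose proof PI_RGT_0.
  pose proof (cos_acos c Hc) as Hca; pose proof (sin_acos c Hc) as Hsa.
  assert (Hsq : sqrt (1 - c²) = Rabs s).
  { rewrite <- sqrt_Rsqr_abs; f_equal; unfold Rsqr; nra. }
  rewrite Hsq in Hsa; destruct (Rle_or_lt 0 s) as [Hs|Hs].
  - exists (acos c); rewrite Rabs_right in Hsa by lra; repeat split; lra.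
  - exists (2 * PI - acos c); rewrite Rabs_left in Hsa by lra.
    rewrite cos_minus, sin_minus, cos_2PI, sin_2PI, Hca, Hsa; repeat split; lra.
Qed.

Lemma unit_quat_polar Q : qnorm2 Q = 1 ->
  exists phi r0 r1 r2, 0 <= phi <= PI /\ r0 ^ 2 + r1 ^ 2 + r2 ^ 2 = 1 /\
    Q = qexp phi r0 r1 r2.
Proof.
  destruct Q as [Q0 Q1 Q2 Q3]; unfold qnorm2; cbn [q0 q1 q2 q3]; intro HQ.
  assert (HQ0 : -1 <= Q0 <= 1) by nra.
  pose proof (acos_bound Q0) as Hphi; pose proof (cos_acos Q0 HQ0) as Hcos.
  assert (Hsin : sin (acos Q0) ^ 2 = Q1 ^ 2 + Q2 ^ 2 + Q3 ^ 2)
    by (pose proof (sin_sq_add_cos_sq (acos Q0)); rewrite Hcos in *; lra).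
  assert (Hsin0 : 0 <= sin (acos Q0)) by (apply sin_ge_0; lra).
  exists (acos Q0); destruct (Req_dec (sin (acos Q0)) 0) as [Z|Z].
  - exists 1, 0, 0; split; [exact Hphi|]; split; [ring|].
    assert (Q1 = 0 /\ Q2 = 0 /\ Q3 = 0) as [-> [-> ->]] by (rewrite Z in Hsin; nra).
    unfold qexp; rewrite Z, Hcos; quat_eq; ring.
  - exists (Q1 / sin (acos Q0)), (Q2 / sin (acos Q0)), (Q3 / sin (acos Q0)).
    split; [exact Hphi|]; split.
    + field_simplify; [rewrite <- Hsin; field|]; auto.
    + unfold qexp; rewrite Hcos; quat_eq; field; auto.
Qed.

Definition polar_quat (phi theta : R) : quat := qexp phi (cos theta) (sin theta) 0.

Lemma planar_unit_quat_polar Q : qnorm2 Q = 1 -> q3 Q = 0 ->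
  exists phi theta, in_coord_range phi theta /\ Q = polar_quat phi theta.
Proof.
  intros HQ HQ3.
  destruct (unit_quat_polar Q HQ) as [phi [r0 [r1 [r2 [Hphi [Hr ->]]]]]].
  cbn [qexp q3] in HQ3.
  destruct (Req_dec (sin phi) 0) as [Z|Z].
  - exists phi, 0; split; [split; [|pose proof PI_RGT_0]; lra|].
    unfold polar_quat, qexp; rewrite Z, cos_0, sin_0; quat_eq; ring.
  - assert (r2 = 0) as -> by (destruct (Rmult_integral _ _ HQ3); auto; contradiction).
    destruct (angle_of_unit r0 r1) as [theta [Htheta [Hc Hs]]]; [lra|].
    exists phi, theta; split; [split; auto|].
    unfold polar_quat; rewrite Hc, Hs; reflexivity.
Qed.

(** * The normal form *)

Lemma qnorm2_polar_quat phi theta : qnorm2 (polar_quat phi theta) = 1.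
Proof.
  unfold qnorm2, polar_quat, qexp; cbn [q0 q1 q2 q3].
  pose proof (sin_sq_add_cos_sq phi); pose proof (sin_sq_add_cos_sq theta); nra.
Qed.

Definition qk : quat := Qt 0 0 0 1.

Lemma qnorm2_qk : qnorm2 qk = 1.
Proof. unfold qnorm2; simpl; ring. Qed.

Definition h_of_B (B : quat) : quat :=
  let c := sqrt (q0 B ^ 2 + q2 B ^ 2) in Qt 0 (q0 B / c) 0 (- q2 B / c).

(* The normal form of a point with longitude [Q] and holonomy [B]: [a] is [i sigma_z]
   and [h] is the unit vector of the (sigma_x, sigma_z)-plane, with positive sigma_x
   part, solving the relation [h w a B = a B h]. *)
Definition rep_of (Q B : quat) : rep :=
  let h := h_of_B B in
  Rep (qmul h Q) B qk (qopp (qmul (qmul h (qinv qk)) (qinv h))) h (qopp qone).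

Lemma param_rep_of eps phi theta :
  param eps phi theta = rep_of (polar_quat phi theta) (polar_quat (eps * sin phi) theta).
Proof.
  unfold param, rep_of, h_of_B, polar_quat, qexp; cbn [q0 q2].
  replace ((sin (eps * sin phi) * sin theta) ^ 2)
    with (sin (eps * sin phi) ^ 2 * sin theta ^ 2) by ring.
  rewrite !Rmult_0_r; reflexivity.
Qed.

Section RepOf.

Variables Q B : quat.
Hypothesis HB : q0 B <> 0.

Let hnorm_pos : 0 < sqrt (q0 B ^ 2 + q2 B ^ 2).
Proof. apply sqrt_lt_R0; pose proof (pow2_ge_0 (q2 B)); pose proof (pow_nonzero _ 2 HB); nra. Qed.

Lemma qnorm2_h_of_B : qnorm2 (h_of_B B) = 1.
Proof.
  pose proof hnorm_pos as Hc; unfold h_of_B, qnorm2; cbn [q0 q1 q2 q3].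
  set (c := sqrt (q0 B ^ 2 + q2 B ^ 2)) in *.
  assert (Hc2 : c ^ 2 = q0 B ^ 2 + q2 B ^ 2).
  { unfold c; rewrite <- Rsqr_pow2; apply Rsqr_sqrt.
    pose proof (pow2_ge_0 (q0 B)); pose proof (pow2_ge_0 (q2 B)); lra. }
  replace (0 ^ 2 + (q0 B / c) ^ 2 + 0 ^ 2 + (- q2 B / c) ^ 2)
    with ((q0 B ^ 2 + q2 B ^ 2) / c ^ 2) by (field; lra).
  rewrite <- Hc2; field; lra.
Qed.

Lemma longitude_rep_of : longitude (rep_of Q B) = Q.
Proof.
  unfold longitude, rep_of; cbn [rA rh].
  rewrite <- qmul_assoc, qmul_inv_l, qmul_1l by (rewrite qnorm2_h_of_B; lra).
  reflexivity.
Qed.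

Lemma h_of_B_relation : q3 B = 0 ->
  let h := h_of_B B in qmul (qmul (qmul h (qopp qone)) qk) B = qmul (qmul qk B) h.
Proof.
  intros HB3 h; pose proof hnorm_pos as Hc; unfold h, h_of_B, qk in *.
  destruct B as [b0 b1 b2 b3]; cbn [q0 q1 q2 q3] in *; subst b3.
  set (c := sqrt (b0 ^ 2 + b2 ^ 2)) in *; quat_eq; field; lra.
Qed.

End RepOf.

Lemma q1_h_of_B_pos B : 0 < q0 B -> 0 < q1 (h_of_B B).
Proof.
  intro HB; apply Rdiv_lt_0_compat; [exact HB|].
  apply sqrt_lt_R0; pose proof (pow2_ge_0 (q2 B)); nra.
Qed.

Lemma cos_pos_lt1 t : 0 <= t < 1 -> 0 < cos t.
Proof. intro; pose proof PI2_1; apply cos_gt_0; lra. Qed.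

Lemma sin_pos_lt1 t : 0 < t < 1 -> 0 < sin t.
Proof. intro; pose proof PI2_1; apply sin_gt_0; lra. Qed.

Lemma holonomy_angle_range eps phi : 0 < eps < 1 -> 0 <= phi <= PI ->
  0 <= eps * sin phi < 1.
Proof.
  intros He Hphi; assert (0 <= sin phi) by (apply sin_ge_0; lra).
  pose proof (SIN_bound phi); nra.
Qed.

Lemma q0_param_B_pos eps phi theta : 0 < eps < 1 -> 0 <= phi <= PI ->
  0 < q0 (polar_quat (eps * sin phi) theta).
Proof. intros He Hphi; exact (cos_pos_lt1 _ (holonomy_angle_range eps phi He Hphi)). Qed.

Theorem in_Rset_param eps phi theta : 0 < eps < 1 -> 0 <= phi <= PI ->
  in_Rset eps (param eps phi theta).
Proof.
  intros He Hphi; rewrite param_rep_of.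
  set (Q := polar_quat phi theta); set (B := polar_quat (eps * sin phi) theta).
  assert (HB0 : q0 B <> 0) by (pose proof (q0_param_B_pos eps phi theta He Hphi); unfold B; lra).
  pose proof (qnorm2_h_of_B B HB0) as Hh; pose proof (longitude_rep_of Q B HB0) as Hlon.
  unfold longitude in Hlon; unfold in_Rset, rep_of, in_SU2, qtrace in *.
  cbn [rA rB ra rb rh rw] in *.
  split; [rewrite qnorm2_mul, Hh; unfold Q; rewrite qnorm2_polar_quat; ring|].
  split; [apply qnorm2_polar_quat|].
  split; [exact qnorm2_qk|].
  split; [rewrite qnorm2_opp, !qnorm2_mul, !qnorm2_inv, Hh, qnorm2_qk
            by (rewrite ?qnorm2_qk; lra); field|].
  split; [exact Hh|].
  split; [rewrite qnorm2_opp; exact qnorm2_1|].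
  split; [unfold qk; simpl; ring|].
  split; [unfold h_of_B; simpl; ring|].
  split; [reflexivity|].
  split; [|split; [rewrite qinv_m1, qmul_m1r, qmul_opp_l; reflexivity|]].
  - apply h_of_B_relation; [exact HB0 | unfold B, polar_quat, qexp; simpl; ring].
  - intros phi' r0 r1 r2 Hr HQ; rewrite Hlon in HQ.
    apply (qexp_holonomy_eq eps phi (cos theta) (sin theta) 0 phi' r0 r1 r2); auto.
    pose proof (sin_sq_add_cos_sq theta); lra.
Qed.

(** * The conjugation invariant *)

(* For pure imaginary [h] and unit [a], [q0 (h a) = - h.a], so [hperp x] is the
   component of [h] orthogonal to [a]; together with [a] it spans a frame in
   which the axis of the longitude is read off. *)
Definition hperp (x : rep) : quat :=
  qadd (rh x) (qscale (q0 (qmul (rh x) (ra x))) (ra x)).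

Definition sph_of_rep (x : rep) : pt3 :=
  let Q := longitude x in
  let n := sqrt (qnorm2 (hperp x)) in
  (- q0 (qmul Q (hperp x)) / n, q0 (qmul Q (qmul (ra x) (hperp x))) / n, q0 Q).

Section Invariance.

Variables (g : quat) (x : rep).
Hypothesis Hg : qnorm2 g <> 0.

Lemma longitude_act : qnorm2 (rh x) <> 0 ->
  longitude (rep_act g x) = qconj g (longitude x).
Proof.
  intro Hh; unfold longitude, rep_act; cbn.
  rewrite qconj_mul, qconj_inv by auto; reflexivity.
Qed.

Lemma hperp_act : hperp (rep_act g x) = qconj g (hperp x).
Proof.
  unfold hperp, rep_act; cbn [ra rh].
  rewrite qconj_add, qconj_scale, <- qconj_mul, q0_conj by exact Hg; reflexivity.
Qed.

Lemma qnorm2_hperp_act : qnorm2 (hperp (rep_act g x)) = qnorm2 (hperp x).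
Proof. rewrite hperp_act; exact (qnorm2_conj g Hg _). Qed.

Lemma sph_of_rep_act : qnorm2 (rh x) <> 0 -> sph_of_rep (rep_act g x) = sph_of_rep x.
Proof.
  intro Hh; unfold sph_of_rep.
  rewrite longitude_act, hperp_act by auto.
  change (ra (rep_act g x)) with (qconj g (ra x)).
  rewrite <- !qconj_mul, !q0_conj, qnorm2_conj by exact Hg; reflexivity.
Qed.

End Invariance.

Lemma sph_of_rep_conj x y : rep_conj x y -> qnorm2 (rh x) <> 0 -> sph_of_rep y = sph_of_rep x.
Proof.
  intros Hxy Hh; apply rep_conjP in Hxy as [g [Hg ->]].
  exact (sph_of_rep_act g x (in_SU2_neq0 g Hg) Hh).
Qed.

Lemma qnorm2_hperp_conj x y : rep_conj x y -> qnorm2 (hperp y) = qnorm2 (hperp x).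
Proof.
  intro Hxy; apply rep_conjP in Hxy as [g [Hg ->]].
  exact (qnorm2_hperp_act g x (in_SU2_neq0 g Hg)).
Qed.

Lemma hperp_rep_of Q B : hperp (rep_of Q B) = Qt 0 (q1 (h_of_B B)) 0 0.
Proof. unfold hperp, rep_of, h_of_B, qk, qscale, qadd; cbn [rh ra]; quat_eq; ring. Qed.

Lemma sph_of_rep_rep_of Q B : 0 < q0 B -> sph_of_rep (rep_of Q B) = (q1 Q, q2 Q, q0 Q).
Proof.
  intro HB; unfold sph_of_rep; rewrite longitude_rep_of, hperp_rep_of by lra.
  pose proof (q1_h_of_B_pos B HB) as Hm; set (m := q1 (h_of_B B)) in *.
  replace (qnorm2 (Qt 0 m 0 0)) with (m ^ 2) by (unfold qnorm2; simpl; ring).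
  rewrite sqrt_pow2 by lra.
  unfold rep_of, qk, qmul; cbn [ra q0 q1 q2 q3]; f_equal; try f_equal; field; lra.
Qed.

Lemma sph_of_rep_param eps phi theta : 0 < eps < 1 -> 0 <= phi <= PI ->
  sph_of_rep (param eps phi theta) = sph phi theta.
Proof.
  intros He Hphi; rewrite param_rep_of, sph_of_rep_rep_of
    by exact (q0_param_B_pos eps phi theta He Hphi).
  unfold sph, polar_quat, qexp; reflexivity.
Qed.

Lemma qnorm2_hperp_param eps phi theta : 0 < eps < 1 -> 0 <= phi <= PI ->
  0 < qnorm2 (hperp (param eps phi theta)).
Proof.
  intros He Hphi; rewrite param_rep_of, hperp_rep_of.
  pose proof (q1_h_of_B_pos _ (q0_param_B_pos eps phi theta He Hphi)).
  unfold qnorm2; cbn [q0 q1 q2 q3]; nra.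
Qed.

(** * Surjectivity *)

Lemma qnorm2_longitude eps y : in_Rset eps y -> qnorm2 (longitude y) = 1.
Proof.
  intros [HA [_ [_ [_ [Hh _]]]]]; unfold longitude, in_SU2 in *.
  rewrite qnorm2_mul, qnorm2_inv, Hh, HA by lra; field.
Qed.

Lemma rB_q0_pos eps y : 0 < eps < 1 -> in_Rset eps y -> 0 < q0 (rB y).
Proof.
  intros He Hy; pose proof Hy as [_ [_ [_ [_ [_ [_ [_ [_ [_ [_ [_ Hhol]]]]]]]]]]].
  destruct (unit_quat_polar _ (qnorm2_longitude eps y Hy))
    as [phi [r0 [r1 [r2 [Hphi [Hr HQ]]]]]].
  rewrite (Hhol phi r0 r1 r2 Hr HQ).
  exact (cos_pos_lt1 _ (holonomy_angle_range eps phi He Hphi)).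
Qed.

Lemma relation_normal_form eps y : in_Rset eps y -> ra y = qk ->
  q3 (rB y) = 0 /\
  q1 (rh y) * q2 (rB y) - q2 (rh y) * q1 (rB y) + q3 (rh y) * q0 (rB y) = 0.
Proof.
  intros [_ [_ [_ [_ [Hh [_ [_ [Hth [Hw [Hrel _]]]]]]]]]] Hk.
  rewrite Hw, Hk in Hrel; unfold in_SU2, qnorm2, qtrace in *.
  destruct (rh y) as [h0 h1 h2 h3], (rB y) as [b0 b1 b2 b3]; simpl in *.
  assert (h0 = 0) by lra; subst h0.
  injection Hrel as E0 E1 E2 E3; split; nra.
Qed.

(* Up to normalisation [g = 1 - k a] is the rotation taking the axis [a] to [k];
   it vanishes only for [a = -k], where a half-turn is used instead. *)
Lemma conj_to_qk a1 a2 a3 : a1 ^ 2 + a2 ^ 2 + a3 ^ 2 = 1 ->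
  exists g, qnorm2 g <> 0 /\ qconj g (Qt 0 a1 a2 a3) = qk.
Proof.
  intro Ha; destruct (Req_dec a3 (-1)) as [E|E].
  - assert (a1 = 0 /\ a2 = 0) as [-> ->] by (subst; nra); subst a3.
    exists (Qt 0 1 0 0); split; [unfold qnorm2; simpl; lra|].
    unfold qconj, qinv, qnorm2, qk; simpl; quat_eq; field.
  - set (g := Qt (1 + a3) (- a2) a1 0).
    assert (Hg : qnorm2 g <> 0) by (unfold g, qnorm2; simpl; nra).
    exists g; split; auto; unfold qconj.
    replace (qmul g (Qt 0 a1 a2 a3)) with (qmul qk g) by (unfold g, qk; quat_eq; nra).
    rewrite qmul_assoc, qmul_inv_r, qmul_1r by exact Hg; reflexivity.
Qed.

(* [g = (m + hx) + hy k] rotates about the [k]-axis; it vanishes only when [(hx, hy)]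
   is on the negative x-axis, where the half-turn [k] is used instead. *)
Lemma conj_to_xz hx hy hz : 0 < hx ^ 2 + hy ^ 2 ->
  exists g, qnorm2 g <> 0 /\ qconj g qk = qk /\
    qconj g (Qt 0 hx hy hz) = Qt 0 (sqrt (hx ^ 2 + hy ^ 2)) 0 hz.
Proof.
  intro H; set (m := sqrt (hx ^ 2 + hy ^ 2)).
  assert (Hm : 0 < m) by (apply sqrt_lt_R0; lra).
  assert (Hm2 : m ^ 2 = hx ^ 2 + hy ^ 2)
    by (unfold m; rewrite <- Rsqr_pow2; apply Rsqr_sqrt; lra).
  destruct (Req_dec (m + hx) 0) as [E|E].
  - assert (hy = 0) as -> by nra; replace hx with (- m) by lra.
    exists qk; split; [rewrite qnorm2_qk; lra|].
    split; unfold qconj, qinv, qnorm2, qk; simpl; quat_eq; field.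
  - set (g := Qt (m + hx) 0 0 hy).
    assert (Hg : qnorm2 g <> 0) by (unfold g, qnorm2; simpl; nra).
    exists g; split; auto; unfold qconj; split.
    + replace (qmul g qk) with (qmul qk g) by (unfold g, qk; quat_eq; ring).
      rewrite qmul_assoc, qmul_inv_r, qmul_1r by exact Hg; reflexivity.
    + replace (qmul g (Qt 0 hx hy hz)) with (qmul (Qt 0 m 0 hz) g)
        by (unfold g; quat_eq; nra).
      rewrite qmul_assoc, qmul_inv_r, qmul_1r by exact Hg; reflexivity.
Qed.

Lemma unit_solve m hz c t : 0 < m -> 0 < c -> m ^ 2 + hz ^ 2 = 1 -> m * t + hz * c = 0 ->
  m = c / sqrt (c ^ 2 + t ^ 2) /\ hz = - t / sqrt (c ^ 2 + t ^ 2).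
Proof.
  intros Hm Hc Hn Hr.
  assert (Hz : hz = - m * t / c)
    by (apply (Rmult_eq_reg_r c); [field_simplify|]; lra).
  subst hz.
  assert (H2 : m ^ 2 * (c ^ 2 + t ^ 2) = c ^ 2).
  { replace (m ^ 2 * (c ^ 2 + t ^ 2)) with ((m ^ 2 + (- m * t / c) ^ 2) * c ^ 2)
      by (field; lra).
    rewrite Hn; ring. }
  assert (Hs : sqrt (c ^ 2 + t ^ 2) = c / m).
  { apply sqrt_lem_1; [nra | apply Rlt_le, Rdiv_lt_0_compat; lra |].
    apply (Rmult_eq_reg_r (m ^ 2)); [|nra].
    field_simplify; lra. }
  rewrite Hs; split; field; lra.
Qed.

Section NormalForm.

Variables (eps : R) (y : rep).
Hypothesis Heps : 0 < eps < 1.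
Hypothesis Hy : in_Rset eps y.
Hypothesis Hk : ra y = qk.
Hypothesis Hh2 : q2 (rh y) = 0.
Hypothesis Hh1 : 0 < q1 (rh y).

Lemma normal_form_rep_of : y = rep_of (longitude y) (rB y).
Proof.
  destruct (relation_normal_form eps y Hy Hk) as [_ Hrel].
  pose proof (rB_q0_pos eps y Heps Hy) as HB0.
  pose proof Hy as [_ [_ [_ [_ [Hh [_ [_ [Hth [Hw [_ [Hb _]]]]]]]]]]].
  assert (Eh : rh y = h_of_B (rB y)).
  { unfold h_of_B, in_SU2, qnorm2, qtrace in *.
    destruct (rh y) as [h0 m h2 hz]; cbn [q0 q1 q2 q3] in *; subst h2.
    assert (h0 = 0) as -> by lra.
    destruct (unit_solve m hz (q0 (rB y)) (q2 (rB y))) as [-> ->]; auto; lra. }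
  assert (EA : rA y = qmul (rh y) (longitude y)).
  { unfold longitude; rewrite <- qmul_assoc, qmul_inv_r, qmul_1l by exact (in_SU2_neq0 _ Hh).
    reflexivity. }
  unfold rep_of; rewrite <- Eh, <- EA, <- Hk, <- Hw.
  destruct y as [A B a b h w]; cbn in *; subst b.
  rewrite Hw, qinv_m1, qmul_m1r, qmul_opp_l; reflexivity.
Qed.

Lemma normal_form_param : exists phi theta, in_coord_range phi theta /\ y = param eps phi theta.
Proof.
  pose proof Hy as [_ [_ [_ [_ [_ [_ [_ [_ [_ [_ [_ Hhol]]]]]]]]]]].
  destruct (relation_normal_form eps y Hy Hk) as [HB3 _].
  destruct (unit_quat_polar _ (qnorm2_longitude eps y Hy))
    as [phi [r0 [r1 [r2 [Hphi [Hr HQ]]]]]].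
  pose proof (Hhol phi r0 r1 r2 Hr HQ) as HB.
  assert (HQ3 : q3 (longitude y) = 0).
  { rewrite HQ; rewrite HB in HB3; cbn [qexp q3] in *.
    destruct (Rmult_integral _ _ HB3) as [Z | ->]; [|ring].
    replace (sin phi) with 0; [ring|].
    pose proof (holonomy_angle_range eps phi Heps Hphi).
    destruct (Req_dec (eps * sin phi) 0) as [Z'|Z'];
      [destruct (Rmult_integral _ _ Z'); lra|].
    pose proof (sin_pos_lt1 (eps * sin phi)); lra. }
  destruct (planar_unit_quat_polar _ (qnorm2_longitude eps y Hy) HQ3)
    as [phi' [theta [Hc HQ']]].
  exists phi', theta; split; auto.
  rewrite normal_form_rep_of, param_rep_of, HQ'; f_equal.
  apply Hhol; [pose proof (sin_sq_add_cos_sq theta); lra | exact HQ'].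
Qed.

End NormalForm.

Lemma exists_conj_a_qk eps x : in_Rset eps x ->
  exists x1, rep_conj x x1 /\ in_Rset eps x1 /\ ra x1 = qk.
Proof.
  intro Hx; pose proof Hx as [_ [_ [Ha [_ [_ [_ [Hta _]]]]]]].
  unfold in_SU2, qtrace, qnorm2 in Ha, Hta.
  destruct (conj_to_qk (q1 (ra x)) (q2 (ra x)) (q3 (ra x))) as [g [Hg Eg]]; [nra|].
  exists (rep_act g x); split; [|split]; auto using rep_conj_act, in_Rset_act.
  unfold rep_act; cbn [ra]; rewrite <- Eg; f_equal.
  destruct (ra x); simpl in *; f_equal; lra.
Qed.

Lemma exists_conj_normal_form eps x : 0 < eps < 1 -> in_Rset eps x -> ra x = qk ->
  exists x2, rep_conj x x2 /\ in_Rset eps x2 /\ ra x2 = qk /\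
    q2 (rh x2) = 0 /\ 0 < q1 (rh x2).
Proof.
  intros He Hx Hk; pose proof Hx as [_ [_ [_ [_ [Hh [_ [_ [Hth _]]]]]]]].
  unfold in_SU2, qtrace, qnorm2 in Hh, Hth.
  destruct (relation_normal_form eps x Hx Hk) as [_ Hrel].
  pose proof (rB_q0_pos eps x He Hx) as HB0.
  set (h := rh x) in *.
  assert (Eh : h = Qt 0 (q1 h) (q2 h) (q3 h)) by (destruct h; simpl in *; f_equal; lra).
  assert (Hxy : 0 < q1 h ^ 2 + q2 h ^ 2).
  { destruct (Rlt_or_le 0 (q1 h ^ 2 + q2 h ^ 2)) as [P|P]; auto.
    assert (q1 h = 0 /\ q2 h = 0) as [Z1 Z2] by nra.
    rewrite Z1, Z2 in Hrel.
    assert (q3 h = 0) by (destruct (Rmult_integral (q3 h) (q0 (rB x))); lra).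
    nra. }
  destruct (conj_to_xz (q1 h) (q2 h) (q3 h) Hxy) as [g [Hg [Egk Egh]]].
  assert (Eh' : rh (rep_act g x) = Qt 0 (sqrt (q1 h ^ 2 + q2 h ^ 2)) 0 (q3 h))
    by (unfold rep_act; cbn [rh]; fold h; rewrite Eh, Egh; reflexivity).
  exists (rep_act g x); split; [|split; [|split; [|split]]]; auto using rep_conj_act, in_Rset_act.
  - unfold rep_act; cbn [ra]; rewrite Hk; exact Egk.
  - rewrite Eh'; reflexivity.
  - rewrite Eh'; apply sqrt_lt_R0; exact Hxy.
Qed.

Theorem exists_rep_conj_param eps x : 0 < eps < 1 -> in_Rset eps x ->
  exists phi theta, in_coord_range phi theta /\ rep_conj x (param eps phi theta).
Proof.
  intros He Hx.
  destruct (exists_conj_a_qk eps x Hx) as [x1 [Hxx1 [Hx1 Hk1]]].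
  destruct (exists_conj_normal_form eps x1 He Hx1 Hk1) as [x2 [Hx1x2 [Hx2 [Hk2 [Hh2 Hh1]]]]].
  destruct (normal_form_param eps x2 He Hx2 Hk2 Hh2 Hh1) as [phi [theta [Hc ->]]].
  exists phi, theta; split; [exact Hc | exact (rep_conj_trans _ _ _ Hxx1 Hx1x2)].
Qed.

(** * Continuity *)

Section Continuity.

Context {T : Type} {d : T -> T -> R} {x : T}.

Definition near (P : T -> Prop) : Prop :=
  exists delta, 0 < delta /\ forall y, d x y < delta -> P y.

Definition cont_at (f : T -> R) : Prop :=
  forall e, 0 < e -> near (fun y => Rabs (f y - f x) < e).

Lemma near_and {P Q : T -> Prop} : near P -> near Q -> near (fun y => P y /\ Q y).
Proof.
  intros [d1 [H1 P1]] [d2 [H2 P2]]; exists (Rmin d1 d2); split; [apply Rmin_glb_lt; auto|].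
  intros y Hy; split; [apply P1 | apply P2];
    eapply Rlt_le_trans; eauto; [apply Rmin_l | apply Rmin_r].
Qed.

Lemma near_mono (P Q : T -> Prop) : (forall y, P y -> Q y) -> near P -> near Q.
Proof. intros HPQ [delta [H1 P1]]; exists delta; split; auto. Qed.

Lemma cont_at_ext f g : (forall y, f y = g y) -> cont_at f -> cont_at g.
Proof.
  intros Efg Hf e He; eapply near_mono; [|exact (Hf e He)].
  intros y; rewrite <- !Efg; auto.
Qed.

Lemma cont_at_lipschitz f : (forall y, Rabs (f y - f x) <= d x y) -> cont_at f.
Proof. intros H e He; exists e; split; auto; intros y Hy; eapply Rle_lt_trans; eauto. Qed.

Lemma cont_at_const c : cont_at (fun _ => c).
Proof. intros e He; exists 1; split; [lra|]; intros; rewrite Rminus_diag, Rabs_R0; lra. Qed.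

Lemma cont_at_comp g f : cont_at f -> continuity_pt g (f x) -> cont_at (fun y => g (f y)).
Proof.
  intros Hf Hg e He.
  destruct (Hg e He) as [delta [Hdelta Hgd]]; unfold D_x, no_cond in Hgd; simpl in Hgd.
  apply (near_mono (fun y => Rabs (f y - f x) < delta)); [|apply Hf; exact Hdelta].
  intros y Hy; destruct (Req_dec (f y) (f x)) as [E|E].
  - rewrite E, Rminus_diag, Rabs_R0; exact He.
  - exact (Hgd (f y) (conj (conj I (not_eq_sym E)) Hy)).
Qed.

Lemma cont_at_plus f g : cont_at f -> cont_at g -> cont_at (fun y => f y + g y).
Proof.
  intros Hf Hg e He.
  apply (near_mono (fun y => Rabs (f y - f x) < e / 2 /\ Rabs (g y - g x) < e / 2)).
  - intros y [A B]; replace (f y + g y - (f x + g x)) with ((f y - f x) + (g y - g x)) by ring.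
    eapply Rle_lt_trans; [apply Rabs_triang | lra].
  - apply near_and; [apply Hf | apply Hg]; lra.
Qed.

Lemma cont_at_opp f : cont_at f -> cont_at (fun y => - f y).
Proof. intro Hf; apply (cont_at_comp (fun t => - t) f Hf), derivable_continuous_pt; reg. Qed.

Lemma cont_at_minus f g : cont_at f -> cont_at g -> cont_at (fun y => f y - g y).
Proof. intros Hf Hg; exact (cont_at_plus _ _ Hf (cont_at_opp g Hg)). Qed.

Lemma cont_at_pow2 f : cont_at f -> cont_at (fun y => f y ^ 2).
Proof.
  intro Hf; apply (cont_at_comp (fun t => t ^ 2) f Hf).
  apply derivable_continuous_pt; reg.
Qed.

(* Polarisation reduces products to squares. *)
Lemma cont_at_mult f g : cont_at f -> cont_at g -> cont_at (fun y => f y * g y).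
Proof.
  intros Hf Hg.
  apply (cont_at_ext (fun y => ((f y + g y) ^ 2 - (f y - g y) ^ 2) * / 4)); [intro; field|].
  apply (cont_at_comp (fun t => t * / 4)); [|apply derivable_continuous_pt; reg].
  apply cont_at_minus; apply cont_at_pow2; [apply cont_at_plus | apply cont_at_minus]; auto.
Qed.

Lemma cont_at_inv f : cont_at f -> f x <> 0 -> cont_at (fun y => / f y).
Proof.
  intros Hf Hn; apply (cont_at_comp Rinv f Hf).
  apply (continuity_pt_inv id); [apply derivable_continuous_pt; reg | exact Hn].
Qed.

Lemma cont_at_div f g : cont_at f -> cont_at g -> g x <> 0 -> cont_at (fun y => f y / g y).
Proof. intros Hf Hg Hn; apply cont_at_mult; auto; apply cont_at_inv; auto. Qed.

Lemma cont_at_sqrt f : cont_at f -> 0 <= f x -> cont_at (fun y => sqrt (f y)).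
Proof. intros Hf Hn; apply (cont_at_comp sqrt f Hf), continuity_pt_sqrt, Hn. Qed.

Lemma cont_at_cos f : cont_at f -> cont_at (fun y => cos (f y)).
Proof. intro Hf; apply (cont_at_comp cos f Hf), continuity_cos. Qed.

Definition qcont_at (F : T -> quat) : Prop :=
  cont_at (fun y => q0 (F y)) /\ cont_at (fun y => q1 (F y)) /\
  cont_at (fun y => q2 (F y)) /\ cont_at (fun y => q3 (F y)).

Lemma qcont_at_Qt f0 f1 f2 f3 : cont_at f0 -> cont_at f1 -> cont_at f2 -> cont_at f3 ->
  qcont_at (fun y => Qt (f0 y) (f1 y) (f2 y) (f3 y)).
Proof. intros; repeat split; auto. Qed.

Lemma qcont_at_const c : qcont_at (fun _ => c).
Proof. repeat split; apply cont_at_const. Qed.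

Lemma qcont_at_mul F G : qcont_at F -> qcont_at G -> qcont_at (fun y => qmul (F y) (G y)).
Proof.
  intros [A0 [A1 [A2 A3]]] [B0 [B1 [B2 B3]]]; unfold qmul.
  repeat split; cbn [q0 q1 q2 q3];
    repeat (apply cont_at_plus || apply cont_at_opp || apply cont_at_mult); auto.
Qed.

Lemma qcont_at_opp F : qcont_at F -> qcont_at (fun y => qopp (F y)).
Proof. intros [A0 [A1 [A2 A3]]]; repeat split; apply cont_at_opp; auto. Qed.

Lemma qcont_at_add F G : qcont_at F -> qcont_at G -> qcont_at (fun y => qadd (F y) (G y)).
Proof. intros [A0 [A1 [A2 A3]]] [B0 [B1 [B2 B3]]]; repeat split; apply cont_at_plus; auto. Qed.

Lemma qcont_at_scale f F : cont_at f -> qcont_at F -> qcont_at (fun y => qscale (f y) (F y)).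
Proof. intros Hf [A0 [A1 [A2 A3]]]; repeat split; apply cont_at_mult; auto. Qed.

Lemma qcont_at_qnorm2 F : qcont_at F -> cont_at (fun y => qnorm2 (F y)).
Proof. intros [A0 [A1 [A2 A3]]]; repeat apply cont_at_plus; apply cont_at_pow2; auto. Qed.

Lemma qcont_at_inv F : qcont_at F -> qnorm2 (F x) <> 0 -> qcont_at (fun y => qinv (F y)).
Proof.
  intros HF Hn; pose proof (qcont_at_qnorm2 F HF) as HN; destruct HF as [A0 [A1 [A2 A3]]].
  repeat split; cbn [q0 q1 q2 q3 qinv]; apply cont_at_div; auto; apply cont_at_opp; auto.
Qed.

End Continuity.

Arguments near {T} d x P.
Arguments cont_at {T} d x f.
Arguments qcont_at {T} d x F.

Lemma abs_le_sqrt a b : a ^ 2 <= b -> Rabs a <= sqrt b.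
Proof. intro H; rewrite <- sqrt_Rsqr_abs; apply sqrt_le_1_alt; unfold Rsqr; lra. Qed.

Lemma sqr_lt_of_abs_lt a b e : Rabs (a - b) < e -> (b - a) ^ 2 < e ^ 2.
Proof.
  intro H; rewrite <- Rabs_Ropp, Ropp_minus_distr in H.
  rewrite <- pow2_abs; pose proof (Rabs_pos (b - a)); nra.
Qed.

Lemma qdist2_ge0 a b : 0 <= qdist2 a b.
Proof. unfold qdist2; repeat apply Rplus_le_le_0_compat; apply pow2_ge_0. Qed.

Section Distances.

Context {T : Type} {d : T -> T -> R} {x : T}.

Lemma qcont_at_of_le (G : T -> quat) :
  (forall y, sqrt (qdist2 (G x) (G y)) <= d x y) -> qcont_at d x G.
Proof.
  intro H; unfold qcont_at; repeat split; apply cont_at_lipschitz; intro y;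
    (eapply Rle_trans; [|apply H]); rewrite <- Rabs_Ropp, Ropp_minus_distr;
    apply abs_le_sqrt; unfold qdist2;
    pose proof (pow2_ge_0 (q0 (G x) - q0 (G y))); pose proof (pow2_ge_0 (q1 (G x) - q1 (G y)));
    pose proof (pow2_ge_0 (q2 (G x) - q2 (G y))); pose proof (pow2_ge_0 (q3 (G x) - q3 (G y)));
    lra.
Qed.

Lemma near_qdist2 (G : T -> quat) : qcont_at d x G ->
  forall e, 0 < e -> near d x (fun y => qdist2 (G x) (G y) < e).
Proof.
  intros [H0 [H1 [H2 H3]]] e He.
  set (e' := sqrt e / 2).
  assert (He' : 0 < e') by (apply Rdiv_lt_0_compat; [apply sqrt_lt_R0|]; lra).
  assert (Hsq : 4 * e' ^ 2 = e).
  { replace (4 * e' ^ 2) with (sqrt e * sqrt e) by (unfold e'; field).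
    apply sqrt_sqrt; lra. }
  eapply near_mono;
    [|exact (near_and (near_and (H0 e' He') (H1 e' He')) (near_and (H2 e' He') (H3 e' He')))].
  intros y [[A0 A1] [A2 A3]]; unfold qdist2.
  apply sqr_lt_of_abs_lt in A0, A1, A2, A3; lra.
Qed.

Lemma near_rep_dist (F : T -> rep) :
  qcont_at d x (fun y => rA (F y)) -> qcont_at d x (fun y => rB (F y)) ->
  qcont_at d x (fun y => ra (F y)) -> qcont_at d x (fun y => rb (F y)) ->
  qcont_at d x (fun y => rh (F y)) -> qcont_at d x (fun y => rw (F y)) ->
  forall e, 0 < e -> near d x (fun y => rep_dist (F x) (F y) < e).
Proof.
  intros HA HB Ha Hb Hh Hw e He.
  assert (He6 : 0 < e ^ 2 / 6) by (apply Rdiv_lt_0_compat; nra).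
  pose proof (fun G HG => near_qdist2 G HG _ He6) as N.
  eapply near_mono;
    [|exact (near_and (near_and (near_and (N _ HA) (N _ HB)) (near_and (N _ Ha) (N _ Hb)))
                      (near_and (N _ Hh) (N _ Hw)))].
  intros y H; cbv beta in H; unfold rep_dist; rewrite <- (sqrt_pow2 e) by lra.
  pose proof (fun p : rep -> quat => qdist2_ge0 (p (F x)) (p (F y))) as Hp.
  pose proof (Hp rA); pose proof (Hp rB); pose proof (Hp ra); pose proof (Hp rb);
    pose proof (Hp rh); pose proof (Hp rw).
  apply sqrt_lt_1_alt; lra.
Qed.

Lemma near_dist3 (f1 f2 f3 : T -> R) :
  cont_at d x f1 -> cont_at d x f2 -> cont_at d x f3 ->
  forall e, 0 < e -> near d x (fun y => dist3 (f1 x, f2 x, f3 x) (f1 y, f2 y, f3 y) < e).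
Proof.
  intros H1 H2 H3 e He; assert (He2 : 0 < e / 2) by lra.
  eapply near_mono; [|exact (near_and (near_and (H1 _ He2) (H2 _ He2)) (H3 _ He2))].
  intros y [[A1 A2] A3]; apply sqr_lt_of_abs_lt in A1, A2, A3; unfold dist3.
  rewrite <- (sqrt_pow2 e) by lra; apply sqrt_lt_1_alt.
  pose proof (pow2_ge_0 (f1 x - f1 y)); pose proof (pow2_ge_0 (f2 x - f2 y));
    pose proof (pow2_ge_0 (f3 x - f3 y)); nra.
Qed.

End Distances.

Definition px (p : pt3) : R := fst (fst p).
Definition py (p : pt3) : R := snd (fst p).
Definition pz (p : pt3) : R := snd p.

Lemma pt3_coords_cont_at p : cont_at dist3 p px /\ cont_at dist3 p py /\ cont_at dist3 p pz.
Proof.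
  destruct p as [[a b] c]; repeat split; apply cont_at_lipschitz; intros [[a' b'] c'];
    unfold px, py, pz, dist3; simpl; rewrite <- Rabs_Ropp, Ropp_minus_distr; apply abs_le_sqrt;
    pose proof (pow2_ge_0 (a - a')); pose proof (pow2_ge_0 (b - b'));
    pose proof (pow2_ge_0 (c - c')); lra.
Qed.

Lemma rep_fields_qcont_at x :
  qcont_at rep_dist x rA /\ qcont_at rep_dist x ra /\ qcont_at rep_dist x rh.
Proof.
  repeat split; apply qcont_at_of_le; intro y; unfold rep_dist; apply sqrt_le_1_alt;
    pose proof (fun p : rep -> quat => qdist2_ge0 (p x) (p y)) as Hp;
    pose proof (Hp rA); pose proof (Hp rB); pose proof (Hp ra); pose proof (Hp rb);
    pose proof (Hp rh); pose proof (Hp rw); lra.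
Qed.

Definition sinc (t : R) : R := if Req_EM_T t 0 then 1 else sin t / t.

Lemma mul_sinc t : t * sinc t = sin t.
Proof.
  unfold sinc; destruct (Req_EM_T t 0) as [->|Ht]; [rewrite sin_0; ring | field; exact Ht].
Qed.

Lemma continuity_sinc t0 : continuity_pt sinc t0.
Proof.
  intros e He; unfold D_x, no_cond; simpl; unfold Rdist.
  destruct (Req_dec t0 0) as [->|Hn].
  - destruct (derivable_pt_lim_sin_0 e He) as [delta Hdelta].
    exists delta; split; [apply cond_pos|]; intros t [[_ Ht] Hd]; rewrite Rminus_0_r in Hd.
    specialize (Hdelta t (not_eq_sym Ht) Hd).
    unfold sinc; destruct (Req_EM_T t 0), (Req_EM_T 0 0); try congruence.
    rewrite Rplus_0_l, sin_0, Rminus_0_r in Hdelta; exact Hdelta.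
  - assert (Hc : continuity_pt (fun t => sin t / t) t0)
      by (apply derivable_continuous_pt; reg; exact Hn).
    destruct (Hc e He) as [delta [Hdelta Hf]]; unfold D_x, no_cond in Hf; simpl in Hf.
    exists (Rmin delta (Rabs t0)); split; [apply Rmin_glb_lt; auto; apply Rabs_pos_lt; auto|].
    intros t [_ Hd]; unfold Rdist in Hf.
    assert (Ht : t <> 0).
    { intro Z; subst; rewrite Rminus_0_l, Rabs_Ropp in Hd.
      pose proof (Rmin_r delta (Rabs t0)); lra. }
    unfold sinc; destruct (Req_EM_T t 0), (Req_EM_T t0 0); try congruence.
    destruct (Req_dec t t0) as [->|Htt]; [rewrite Rminus_diag, Rabs_R0; exact He|].
    apply Hf; split; [split; auto|]; eapply Rlt_le_trans; [exact Hd | apply Rmin_l].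
Qed.

Section RepOfContinuity.

Context {T : Type} {d : T -> T -> R} {x : T}.
Variables F G : T -> quat.
Hypotheses (HF : qcont_at d x F) (HG : qcont_at d x G) (HG0 : q0 (G x) <> 0).

Lemma h_of_B_qcont_at : qcont_at d x (fun y => h_of_B (G y)).
Proof.
  destruct HG as [G0 [_ [G2 _]]].
  assert (Hs : cont_at d x (fun y => sqrt (q0 (G y) ^ 2 + q2 (G y) ^ 2)))
    by (apply cont_at_sqrt; [apply cont_at_plus; apply cont_at_pow2; auto | nra]).
  assert (Hs0 : sqrt (q0 (G x) ^ 2 + q2 (G x) ^ 2) <> 0).
  { apply Rgt_not_eq, sqrt_lt_R0; pose proof (pow2_ge_0 (q2 (G x)));
    pose proof (pow_nonzero _ 2 HG0); nra. }
  unfold h_of_B; apply qcont_at_Qt; try apply cont_at_const; apply cont_at_div; auto.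
  apply cont_at_opp; exact G2.
Qed.

Lemma near_rep_of :
  forall e, 0 < e -> near d x (fun y => rep_dist (rep_of (F x) (G x)) (rep_of (F y) (G y)) < e).
Proof.
  pose proof h_of_B_qcont_at as Hh.
  assert (Hh0 : qnorm2 (h_of_B (G x)) <> 0) by (rewrite qnorm2_h_of_B by exact HG0; lra).
  apply (near_rep_dist (fun y => rep_of (F y) (G y))); unfold rep_of; cbn [rA rB ra rb rh rw].
  - apply qcont_at_mul; auto.
  - exact HG.
  - apply qcont_at_const.
  - apply qcont_at_opp, qcont_at_mul; [apply qcont_at_mul; [exact Hh | apply qcont_at_const]|].
    apply qcont_at_inv; auto.
  - exact Hh.
  - apply qcont_at_const.
Qed.

End RepOfContinuity.

Definition pt_longitude (q : pt3) : quat := Qt (pz q) (px q) (py q) 0.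

(* [sinc] makes the holonomy a continuous function of the point, also at the
   poles where [theta] is undefined: [sin nu * cos theta = eps * sinc nu * x]. *)
Definition pt_holonomy (eps : R) (q : pt3) : quat :=
  let nu := eps * sqrt (px q ^ 2 + py q ^ 2) in
  Qt (cos nu) (eps * sinc nu * px q) (eps * sinc nu * py q) 0.

Definition rep_of_pt (eps : R) (q : pt3) : rep := rep_of (pt_longitude q) (pt_holonomy eps q).

Lemma rep_of_pt_sph eps phi theta : 0 <= phi <= PI ->
  rep_of_pt eps (sph phi theta) = param eps phi theta.
Proof.
  intro Hphi; pose proof (sin_ge_0 phi ltac:(lra) ltac:(lra)) as Hs.
  assert (Es : sqrt (px (sph phi theta) ^ 2 + py (sph phi theta) ^ 2) = sin phi).
  { unfold px, py, sph; simpl; apply sqrt_lem_1; [nra | exact Hs |].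
    pose proof (sin_sq_add_cos_sq theta); simpl in *; nra. }
  assert (Esinc : forall c, eps * sinc (eps * sin phi) * (sin phi * c) = sin (eps * sin phi) * c)
    by (intro c; rewrite <- (mul_sinc (eps * sin phi)); ring).
  unfold rep_of_pt, pt_longitude, pt_holonomy; rewrite Es, param_rep_of.
  unfold px, py, pz, sph, polar_quat, qexp; simpl; rewrite !Esinc, !Rmult_0_r; reflexivity.
Qed.

Lemma near_rep_of_pt eps p : 0 < eps < 1 -> in_S2 p ->
  forall e, 0 < e -> near dist3 p (fun q => rep_dist (rep_of_pt eps p) (rep_of_pt eps q) < e).
Proof.
  intros He Hp; destruct (pt3_coords_cont_at p) as [Hx [Hy Hz]].
  set (nu := fun q => eps * sqrt (px q ^ 2 + py q ^ 2)).
  assert (Hnu : cont_at dist3 p nu).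
  { apply cont_at_mult; [apply cont_at_const|]; apply cont_at_sqrt;
      [apply cont_at_plus; apply cont_at_pow2; auto | nra]. }
  assert (Hnu_p : 0 <= nu p < 1).
  { assert (Hxy : px p ^ 2 + py p ^ 2 <= 1).
    { destruct p as [[a b] c]; unfold in_S2, px, py in *; simpl in *; nra. }
    assert (0 <= sqrt (px p ^ 2 + py p ^ 2) <= 1)
      by (split; [apply sqrt_pos | rewrite <- sqrt_1; apply sqrt_le_1_alt; lra]).
    unfold nu; nra. }
  assert (Hsinc : cont_at dist3 p (fun q => eps * sinc (nu q)))
    by (apply cont_at_mult; [apply cont_at_const | apply cont_at_comp; auto using continuity_sinc]).
  apply (near_rep_of pt_longitude (pt_holonomy eps)).
  - unfold pt_longitude; apply qcont_at_Qt; auto using cont_at_const.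
  - unfold pt_holonomy; apply qcont_at_Qt; fold nu;
      auto using cont_at_const, cont_at_cos, cont_at_mult.
  - apply Rgt_not_eq, cos_pos_lt1, Hnu_p.
Qed.

Lemma near_sph_of_rep x : qnorm2 (rh x) <> 0 -> 0 < qnorm2 (hperp x) ->
  forall e, 0 < e -> near rep_dist x (fun y => dist3 (sph_of_rep x) (sph_of_rep y) < e).
Proof.
  intros Hh HN; destruct (rep_fields_qcont_at x) as [HA [Ha Hrh]].
  assert (HQ : qcont_at rep_dist x longitude)
    by (apply qcont_at_mul; [apply qcont_at_inv|]; auto).
  assert (Hperp : qcont_at rep_dist x hperp)
    by (apply qcont_at_add, qcont_at_scale; auto; apply qcont_at_mul; auto).
  assert (Hn : cont_at rep_dist x (fun y => sqrt (qnorm2 (hperp y))))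
    by (apply cont_at_sqrt; [apply qcont_at_qnorm2; exact Hperp | lra]).
  assert (Hn0 : sqrt (qnorm2 (hperp x)) <> 0) by (apply Rgt_not_eq, sqrt_lt_R0; lra).
  apply (near_dist3 (fun y => - q0 (qmul (longitude y) (hperp y)) / sqrt (qnorm2 (hperp y)))
           (fun y => q0 (qmul (longitude y) (qmul (ra y) (hperp y))) / sqrt (qnorm2 (hperp y)))
           (fun y => q0 (longitude y))).
  - apply cont_at_div; auto; apply cont_at_opp; apply qcont_at_mul; auto.
  - apply cont_at_div; auto; apply qcont_at_mul; auto; apply qcont_at_mul; auto.
  - apply HQ.
Qed.

(** * The homeomorphism *)

Lemma sph_in_S2 phi theta : in_S2 (sph phi theta).
Proof.
  unfold in_S2, sph; pose proof (sin_sq_add_cos_sq phi); pose proof (sin_sq_add_cos_sq theta).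
  transitivity (sin phi ^ 2 * (sin theta ^ 2 + cos theta ^ 2) + cos phi ^ 2); [ring | nra].
Qed.

Lemma sph_surj p : in_S2 p -> exists phi theta, in_coord_range phi theta /\ sph phi theta = p.
Proof.
  destruct p as [[a b] c]; unfold in_S2; intro H.
  destruct (planar_unit_quat_polar (Qt c a b 0)) as [phi [theta [Hc E]]];
    [unfold qnorm2; simpl in *; lra | reflexivity |].
  exists phi, theta; split; auto.
  unfold polar_quat, qexp in E; injection E as Ec Ea Eb _.
  unfold sph; rewrite Ea, Eb, Ec; reflexivity.
Qed.

Lemma in_Rset_rh_neq0 eps x : in_Rset eps x -> qnorm2 (rh x) <> 0.
Proof. intros [_ [_ [_ [_ [Hh _]]]]]; exact (in_SU2_neq0 _ Hh). Qed.

Lemma sph_of_rep_eq_sph eps x phi theta : 0 < eps < 1 -> in_Rset eps x ->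
  in_coord_range phi theta -> rep_conj x (param eps phi theta) -> sph_of_rep x = sph phi theta.
Proof.
  intros He Hx [Hphi _] Hxp.
  rewrite <- (sph_of_rep_param eps phi theta He Hphi); symmetry.
  exact (sph_of_rep_conj _ _ Hxp (in_Rset_rh_neq0 eps x Hx)).
Qed.

Lemma param_sph_conj eps phi theta phi' theta' : in_coord_range phi theta ->
  in_coord_range phi' theta' -> sph phi theta = sph phi' theta' ->
  rep_conj (param eps phi theta) (param eps phi' theta').
Proof.
  intros [Hphi _] [Hphi' _] E.
  rewrite <- (rep_of_pt_sph eps phi theta), <- (rep_of_pt_sph eps phi' theta'), E by auto.
  apply rep_conj_refl.
Qed.

Lemma open_in_param_preimage eps W : 0 < eps < 1 -> open_in rep_dist (in_Rset eps) W ->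
  open_in dist3 in_S2 (fun p => exists phi theta,
    in_coord_range phi theta /\ sph phi theta = p /\ W (param eps phi theta)).
Proof.
  intros He HW p Hp [phi [theta [Hc [<- HWp]]]].
  destruct (HW _ (in_Rset_param eps phi theta He (proj1 Hc)) HWp) as [dW [HdW HWn]].
  destruct (near_rep_of_pt eps _ He Hp dW HdW) as [delta [Hdelta Hnear]].
  exists delta; split; auto; intros q Hq Hd.
  destruct (sph_surj q Hq) as [phi' [theta' [Hc' <-]]].
  exists phi', theta'; split; [|split]; auto.
  apply HWn; [exact (in_Rset_param eps phi' theta' He (proj1 Hc'))|].
  rewrite <- (rep_of_pt_sph eps phi theta), <- (rep_of_pt_sph eps phi' theta')
    by (apply Hc || apply Hc').
  exact (Hnear _ Hd).
Qed.

Lemma open_in_param_image eps U : 0 < eps < 1 -> open_in dist3 in_S2 U ->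
  open_in rep_dist (in_Rset eps) (fun x => exists phi theta,
    in_coord_range phi theta /\ U (sph phi theta) /\ rep_conj x (param eps phi theta)).
Proof.
  intros He HU x Hx [phi [theta [Hc [HUp Hxp]]]].
  assert (HN : 0 < qnorm2 (hperp x)).
  { rewrite <- (qnorm2_hperp_conj _ _ Hxp).
    exact (qnorm2_hperp_param eps phi theta He (proj1 Hc)). }
  destruct (HU _ (sph_in_S2 phi theta) HUp) as [dU [HdU HUn]].
  destruct (near_sph_of_rep x (in_Rset_rh_neq0 eps x Hx) HN dU HdU)
    as [delta [Hdelta Hnear]].
  exists delta; split; auto; intros y Hy Hd.
  destruct (exists_rep_conj_param eps y He Hy) as [phi' [theta' [Hc' Hyp]]].
  exists phi', theta'; split; [|split]; auto.
  apply HUn; [apply sph_in_S2|].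
  rewrite <- (sph_of_rep_eq_sph eps x phi theta), <- (sph_of_rep_eq_sph eps y phi' theta');
    auto.
Qed.

Theorem theorem2p13 :
  exists eps0 : R, eps0 > 0 /\
  forall eps : R, 0 < eps < eps0 ->
    (forall phi theta, in_coord_range phi theta -> in_Rset eps (param eps phi theta)) /\
    (forall phi theta phi' theta', in_coord_range phi theta -> in_coord_range phi' theta' ->
       sph phi theta = sph phi' theta' ->
       rep_conj (param eps phi theta) (param eps phi' theta')) /\
    (forall phi theta phi' theta', in_coord_range phi theta -> in_coord_range phi' theta' ->
       rep_conj (param eps phi theta) (param eps phi' theta') ->
       sph phi theta = sph phi' theta') /\
    (forall x, in_Rset eps x ->
       exists phi theta, in_coord_range phi theta /\ rep_conj x (param eps phi theta)) /\
    (forall W : rep -> Prop,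
       open_in rep_dist (in_Rset eps) W -> saturated (in_Rset eps) rep_conj W ->
       open_in dist3 in_S2 (fun p => exists phi theta,
          in_coord_range phi theta /\ sph phi theta = p /\ W (param eps phi theta))) /\
    (forall U : pt3 -> Prop, open_in dist3 in_S2 U ->
       open_in rep_dist (in_Rset eps) (fun x => exists phi theta,
          in_coord_range phi theta /\ U (sph phi theta) /\ rep_conj x (param eps phi theta))).
Proof.
  exists 1; split; [lra|]; intros eps He.
  split; [|split; [|split; [|split; [|split]]]].
  - intros phi theta [Hphi _]; exact (in_Rset_param eps phi theta He Hphi).
  - apply param_sph_conj.
  - intros phi theta phi' theta' Hc Hc' Hconj.
    rewrite <- (sph_of_rep_param eps phi theta He (proj1 Hc)).
    exact (sph_of_rep_eq_sph eps _ _ _ He (in_Rset_param eps phi theta He (proj1 Hc)) Hc' Hconj).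
  - intros x Hx; exact (exists_rep_conj_param eps x He Hx).
  - intros W HW _; exact (open_in_param_preimage eps W He HW).
  - intros U HU; exact (open_in_param_image eps U He HU).
Qed.
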